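(* There is an absolute constant $c>0$ such that the following holds. Let $G$ be a finite simple graph with maximum degree $d\ge 1$, and let $D(G)$ be a straight-line drawing of $G$ in the base plane $\mathcal{P}_1=\{z=0\}\subset\mathbb{R}^3$ with arbitrary but distinct vertex positions (no assumption on the angular resolution of $D(G)$). Then there is a slanted 3D arc diagram drawing of $G$ with base plane $\mathcal{P}_1$ and with the same vertex positions as $D(G)$ whose angular resolution is at least $c/\sqrt{d}$.
   Context: A slanted 3D arc diagram drawing of $G$ with base plane $\mathcal{P}_1=\{z=0\}$ is a placement of the vertices at distinct points of $\mathcal{P}_1$, together with, for each edge $e=(a,b)$, a circular arc (a contiguous subset of a circle; a straight segment is allowed as the degenerate case) with endpoints at the positions of $a$ and $b$, such that: the arc lies in a plane $\mathcal{P}_2$ that contains both endpoints and forms a dihedral angle $\beta_e\in[0,\pi/2)$ with $\mathcal{P}_1$; all arcs lie in the closed half-space $z\ge 0$; and within $\mathcal{P}_2$ the arc forms the same angle $\alpha_e\in[0,\pi/2]$ with the segment $ab$ at both of its endpoints. The angle between two arcs incident to a common vertex $v$ is the angle in $[0,\pi]$ between their tangent rays at $v$ (directed into the arcs). The angular resolution of the drawing is the minimum of this angle over all vertices $v$ and all pairs of distinct edges incident to $v$. *)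

From Stdlib Require Import Reals Lra List Arith.
Open Scope R_scope.

Definition V3 := (R * R * R)%type.
Definition vx (v : V3) : R := fst (fst v).
Definition vy (v : V3) : R := snd (fst v).
Definition vz (v : V3) : R := snd v.
Definition mkV (x y z : R) : V3 := (x, y, z).
Definition vadd (u v : V3) : V3 := mkV (vx u + vx v) (vy u + vy v) (vz u + vz v).
Definition vsub (u v : V3) : V3 := mkV (vx u - vx v) (vy u - vy v) (vz u - vz v).
Definition vscale (k : R) (v : V3) : V3 := mkV (k * vx v) (k * vy v) (k * vz v).
Definition dot (u v : V3) : R := vx u * vx v + vy u * vy v + vz u * vz v.
Definition vnorm (v : V3) : R := sqrt (dot v v).
Definition vunit (v : V3) : V3 := vscale (/ vnorm v) v.
Definition cross (u v : V3) : V3 :=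
  mkV (vy u * vz v - vz u * vy v) (vz u * vx v - vx u * vz v) (vx u * vy v - vy u * vx v).

Definition vangle (u v : V3) : R := acos (dot u v / (vnorm u * vnorm v)).

Definition lift (q : R * R) : V3 := mkV (fst q) (snd q) 0.

Definition simple_graph (n : nat) (adj : nat -> nat -> bool) : Prop :=
  (forall a b, adj a b = adj b a) /\
  (forall a, adj a a = false) /\
  (forall a b, adj a b = true -> (a < n)%nat /\ (b < n)%nat).

Definition degree (n : nat) (adj : nat -> nat -> bool) (v : nat) : nat :=
  length (filter (adj v) (seq 0 n)).

Definition max_degree (n : nat) (adj : nat -> nat -> bool) (d : nat) : Prop :=
  (forall v, (v < n)%nat -> (degree n adj v <= d)%nat) /\
  (exists v, (v < n)%nat /\ degree n adj v = d).

Definition distinct_positions (n : nat) (pos : nat -> R * R) : Prop :=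
  forall a b, (a < n)%nat -> (b < n)%nat -> a <> b -> pos a <> pos b.

(** Data of a (symmetric) circular arc between two points a, b:
    - arc_alpha : the angle alpha in [0, pi/2] that the arc makes with the
      segment ab at both endpoints (within its plane P2);
    - arc_W : the unit vector of P2 orthogonal to ab pointing to the side
      of the chord on which the arc lies (P2 = a + span(b - a, W)). *)
Record arc := mkArc { arc_alpha : R; arc_W : V3 }.

(** The point set of the arc with data (alpha, W) joining a and b:
    writing m the midpoint, u the unit chord direction and L = |ab|/2,
    points are m + x u + y W with
    - alpha = 0 : the straight segment (y = 0, -L <= x <= L);
    - alpha > 0 : the part y >= 0 of the circle x^2 + (y + r cos alpha)^2 = r^2,
      r = L / sin alpha (a contiguous arc of that circle with endpoints a, b,
      meeting the chord at angle alpha at both ends). *)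
Definition arc_points (a b : V3) (alpha : R) (W : V3) (P : V3) : Prop :=
  let u := vunit (vsub b a) in
  let L := vnorm (vsub b a) / 2 in
  let m := vadd a (vscale (1/2) (vsub b a)) in
  exists x y : R,
    P = vadd m (vadd (vscale x u) (vscale y W)) /\
    ((alpha = 0 /\ y = 0 /\ - L <= x <= L) \/
     (0 < alpha /\ 0 <= y /\
      let r := L / sin alpha in
      x ^ 2 + (y + r * cos alpha) ^ 2 = r ^ 2)).

(** Unit tangent ray of the arc at endpoint a (directed into the arc, the arc
    going from a to b): rotation of the chord direction by alpha towards W
    inside P2. *)
Definition arc_tangent (a b : V3) (A : arc) : V3 :=
  vadd (vscale (cos (arc_alpha A)) (vunit (vsub b a)))
       (vscale (sin (arc_alpha A)) (arc_W A)).

(** Conditions for a slanted arc joining a and b in the base plane: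
    alpha in [0, pi/2]; W a unit vector orthogonal to ab; the plane
    P2 = a + span(b-a, W) forms a dihedral angle beta in [0, pi/2) with P1
    (beta measured between unit normals); the arc lies in z >= 0. *)
Definition valid_slanted_arc (a b : V3) (A : arc) : Prop :=
  0 <= arc_alpha A <= PI / 2 /\
  vnorm (arc_W A) = 1 /\
  dot (arc_W A) (vsub b a) = 0 /\
  (exists beta, 0 <= beta < PI / 2 /\
     cos beta = Rabs (dot (vunit (cross (vsub b a) (arc_W A))) (mkV 0 0 1))) /\
  (forall P, arc_points a b (arc_alpha A) (arc_W A) P -> 0 <= vz P).

Definition slanted_arc_drawing (n : nat) (adj : nat -> nat -> bool)
    (pos : nat -> R * R) (Arc : nat -> nat -> arc) : Prop :=
  forall a b, adj a b = true ->
    Arc a b = Arc b a /\ valid_slanted_arc (lift (pos a)) (lift (pos b)) (Arc a b).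

Definition angular_resolution_ge (n : nat) (adj : nat -> nat -> bool)
    (pos : nat -> R * R) (Arc : nat -> nat -> arc) (theta : R) : Prop :=
  forall v w1 w2, adj v w1 = true -> adj v w2 = true -> w1 <> w2 ->
    theta <= vangle (arc_tangent (lift (pos v)) (lift (pos w1)) (Arc v w1))
                    (arc_tangent (lift (pos v)) (lift (pos w2)) (Arc v w2)).

(* Each edge {a,b} is drawn as a circular arc whose tangent at an endpoint,
   written in the frame (chord direction, horizontal normal of the chord,
   vertical), is a palette vector (+-A, B, H): the arc meets the chord at
   angle acos A and its plane is tilted upwards, so the arc stays in z >= 0.
   The palette has m^2 unit vectors, A and H ranging over the grid
   {0, s, ..., (m-1)s} with s = 1/(2m) and m = 2(floor(sqrt d) + 1), so
   distinct palette vectors are at distance >= s.  Rotations about the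
   vertical axis and the reflection A -> -A are isometries, hence a tangent
   already present at a vertex is closer than s/2 to the tangent of at most
   one palette choice for a new edge there.  Colouring the edges greedily,
   a new edge faces at most 2(d-1) < m^2 forbidden choices, so all tangents
   at every vertex end up at distance >= s/2, which forces angles
   >= s/2 >= 1/(16 sqrt d). *)

From Stdlib Require Import Reals Lra List Lia Classical.

Open Scope nat_scope.

Lemma length_remove_one (x : nat) (l : list nat) : NoDup l -> In x l ->
  S (length (filter (fun j => negb (Nat.eqb j x)) l)) = length l.
Proof.
  induction l as [|y l IH]; intros Hnodup Hin; [destruct Hin|].
  inversion Hnodup as [|? ? Hy Hl]; subst; simpl.
  destruct (Nat.eqb_spec y x) as [->|Hyx]; simpl.
  - f_equal. clear IH Hin Hnodup Hl. induction l as [|z l IHl]; simpl; auto.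
    destruct (Nat.eqb_spec z x) as [->|_]; simpl.
    + exfalso; apply Hy; left; reflexivity.
    + f_equal; apply IHl; intro; apply Hy; right; assumption.
  - f_equal. apply IH; auto. destruct Hin; [congruence | assumption].
Qed.

Lemma free_index_exists {X : Type} (P : X -> nat -> Prop) (cs : list X) :
  forall l : list nat, NoDup l -> length cs < length l ->
  (forall c, In c cs -> forall i j, In i l -> In j l -> P c i -> P c j -> i = j) ->
  exists k, In k l /\ forall c, In c cs -> ~ P c k.
Proof.
  induction cs as [|c cs IH]; intros l Hnodup Hlen Hunique.
  - destruct l as [|k l]; simpl in Hlen; [lia|].
    exists k; split; [left; reflexivity | intros c []].
  - simpl in Hlen.
    destruct (classic (exists i, In i l /\ P c i)) as [[i0 [Hi0 Pi0]] | Hnone].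
    + (* the first constraint uses up i0: recurse on the remaining indices *)
      set (l' := filter (fun j => negb (Nat.eqb j i0)) l).
      pose proof (length_remove_one i0 l Hnodup Hi0) as Hlen'. fold l' in Hlen'.
      assert (Hsub : forall k, In k l' -> In k l /\ k <> i0).
      { intros k Hk. apply filter_In in Hk as [Hk Hneq].
        apply Bool.negb_true_iff, Nat.eqb_neq in Hneq. auto. }
      destruct (IH l') as [k [Hk Hfree]].
      * apply NoDup_filter; assumption.
      * lia.
      * intros c' Hc' i j Hi Hj.
        apply (Hunique c'); [right | apply Hsub | apply Hsub]; assumption.
      * destruct (Hsub k Hk) as [Hkl Hki]. exists k; split; [assumption|].
        intros c' [<- | Hc']; [|apply Hfree; assumption].
        intro Pk. apply Hki, (Hunique c (or_introl eq_refl)); assumption.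
    + destruct (IH l) as [k [Hk Hfree]]; [assumption | lia | |].
      * intros c' Hc'; apply Hunique; right; assumption.
      * exists k; split; [assumption|].
        intros c' [<- | Hc']; [|apply Hfree; assumption].
        intro Pk; apply Hnone; exists k; auto.
Qed.

Lemma length_filter_lt (p q : nat -> bool) (w : nat) (l : list nat) :
  (forall x, q x = true -> p x = true) -> In w l -> p w = true -> q w = false ->
  length (filter q l) < length (filter p l).
Proof.
  intros Hqp.
  assert (Hle : forall l, length (filter q l) <= length (filter p l)).
  { induction l0 as [|z l0 IH]; simpl; auto.
    destruct (q z) eqn:Ez; [rewrite (Hqp z Ez); simpl; lia|].
    destruct (p z); simpl; lia. }
  induction l as [|y l IH]; intros Hin Hp Hq; [destruct Hin|]; simpl.
  destruct Hin as [<- | Hin].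
  - rewrite Hp, Hq; simpl. specialize (Hle l). lia.
  - specialize (IH Hin Hp Hq). destruct (q y) eqn:Ey.
    + rewrite (Hqp y Ey); simpl; lia.
    + destruct (p y); simpl; lia.
Qed.

Open Scope R_scope.

Definition sqd (x y : V3) : R := dot (vsub x y) (vsub x y).

Lemma sqd_sym x y : sqd x y = sqd y x.
Proof. unfold sqd, vsub, dot, mkV, vx, vy, vz; simpl. ring. Qed.

Lemma sqd_le_double x y z : sqd x z <= 2 * sqd x y + 2 * sqd y z.
Proof.
  destruct x as [[x1 x2] x3], y as [[y1 y2] y3], z as [[z1 z2] z3].
  unfold sqd, vsub, dot, mkV, vx, vy, vz; simpl.
  pose proof (Rle_0_sqr (x1 - 2 * y1 + z1)).
  pose proof (Rle_0_sqr (x2 - 2 * y2 + z2)).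
  pose proof (Rle_0_sqr (x3 - 2 * y3 + z3)). unfold Rsqr in *. nra.
Qed.

Definition rot_z (c s : R) (v : V3) : V3 :=
  mkV (c * vx v - s * vy v) (s * vx v + c * vy v) (vz v).

Lemma rot_z_sqd c s x y : c * c + s * s = 1 -> sqd (rot_z c s x) (rot_z c s y) = sqd x y.
Proof.
  intro Hcs. destruct x as [[x1 x2] x3], y as [[y1 y2] y3].
  unfold sqd, rot_z, vsub, dot, mkV, vx, vy, vz; simpl.
  transitivity ((c * c + s * s) * ((x1 - y1) * (x1 - y1) + (x2 - y2) * (x2 - y2))
                + (x3 - y3) * (x3 - y3)); [ring | rewrite Hcs; ring].
Qed.

Lemma rot_z_dot_self c s x : c * c + s * s = 1 -> dot (rot_z c s x) (rot_z c s x) = dot x x.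
Proof.
  intro Hcs. destruct x as [[x1 x2] x3].
  unfold rot_z, dot, mkV, vx, vy, vz; simpl.
  transitivity ((c * c + s * s) * (x1 * x1 + x2 * x2) + x3 * x3); [ring | rewrite Hcs; ring].
Qed.

Definition flip_x (sg : R) (v : V3) : V3 := mkV (sg * vx v) (vy v) (vz v).

Lemma flip_x_sqd sg x y : sg * sg = 1 -> sqd (flip_x sg x) (flip_x sg y) = sqd x y.
Proof.
  intro Hsg. unfold sqd, flip_x, vsub, dot, mkV, vx, vy, vz; simpl.
  transitivity (sg * sg * ((fst (fst x) - fst (fst y)) * (fst (fst x) - fst (fst y)))
    + (snd (fst x) - snd (fst y)) * (snd (fst x) - snd (fst y))
    + (snd x - snd y) * (snd x - snd y)); [ring | rewrite Hsg; ring].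
Qed.

Lemma flip_x_dot_self sg x : sg * sg = 1 -> dot (flip_x sg x) (flip_x sg x) = dot x x.
Proof.
  intro Hsg. unfold flip_x, dot, mkV, vx, vy, vz; simpl.
  transitivity (sg * sg * (fst (fst x) * fst (fst x)) + snd (fst x) * snd (fst x)
    + snd x * snd x); [ring | rewrite Hsg; ring].
Qed.

(* Two unit vectors at distance at least rho <= 1 make an angle at least rho,
   since |x - y|^2 = 2 - 2 cos(angle) and cos rho >= 1 - rho^2/2. *)
Lemma angle_ge_of_sqd x y rho : dot x x = 1 -> dot y y = 1 -> 0 <= rho <= 1 ->
  rho * rho <= sqd x y -> rho <= vangle x y.
Proof.
  intros Hx Hy Hrho Hdist. unfold vangle, vnorm. rewrite Hx, Hy, sqrt_1.
  replace (dot x y / (1 * 1)) with (dot x y) by field.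
  assert (Hsqd : sqd x y = 2 - 2 * dot x y).
  { unfold sqd, vsub, dot, mkV, vx, vy, vz in *; simpl in *. lra. }
  assert (Hlow : -1 <= dot x y).
  { assert (0 <= dot (vadd x y) (vadd x y)).
    { unfold dot, vadd, mkV, vx, vy, vz; simpl.
      pose proof (Rle_0_sqr (fst (fst x) + fst (fst y))).
      pose proof (Rle_0_sqr (snd (fst x) + snd (fst y))).
      pose proof (Rle_0_sqr (snd x + snd y)). unfold Rsqr in *. lra. }
    unfold dot, vadd, mkV, vx, vy, vz in *; simpl in *. lra. }
  assert (Hcos : 1 - rho * rho / 2 <= cos rho).
  { pose proof PI2_1.
    destruct (cos_bound rho 0) as [Hb _]; [lra | lra |].
    replace (cos_approx rho (2 * 0 + 1)) with (1 - rho * rho / 2) in Hb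
      by (unfold cos_approx, cos_term; simpl; field). exact Hb. }
  pose proof PI2_1.
  apply (cos_decr_0 (acos (dot x y)) rho); try apply acos_bound; try lra.
  assert (0 <= rho * rho) by nra. rewrite cos_acos by lra. lra.
Qed.
Definition chord_len (p q : R * R) : R :=
  sqrt ((fst q - fst p) * (fst q - fst p) + (snd q - snd p) * (snd q - snd p)).
Definition dir_x (p q : R * R) : R := (fst q - fst p) / chord_len p q.
Definition dir_y (p q : R * R) : R := (snd q - snd p) / chord_len p q.

Lemma chord_len_sym p q : chord_len q p = chord_len p q.
Proof. unfold chord_len; f_equal; ring. Qed.

Lemma chord_len_pos p q : p <> q -> 0 < chord_len p q.
Proof.
  intro Hpq. unfold chord_len; apply sqrt_lt_R0.
  destruct p as [px py], q as [qx qy]; simpl.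
  assert (Hne : qx - px <> 0 \/ qy - py <> 0).
  { destruct (Req_dec qx px), (Req_dec qy py); [subst; congruence | right | left | left]; lra. }
  pose proof (Rle_0_sqr (qx - px)). pose proof (Rle_0_sqr (qy - py)). unfold Rsqr in *.
  destruct Hne as [Hne | Hne]; pose proof (Rsqr_pos_lt _ Hne); unfold Rsqr in *; lra.
Qed.

Lemma dir_unit p q : p <> q -> dir_x p q * dir_x p q + dir_y p q * dir_y p q = 1.
Proof.
  intro Hpq. pose proof (chord_len_pos p q Hpq) as Hpos.
  assert (Hsq : chord_len p q * chord_len p q =
    (fst q - fst p) * (fst q - fst p) + (snd q - snd p) * (snd q - snd p)).
  { unfold chord_len. apply sqrt_sqrt.
    apply Rplus_le_le_0_compat; apply Rle_0_sqr. }
  unfold dir_x, dir_y.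
  transitivity (((fst q - fst p) * (fst q - fst p) + (snd q - snd p) * (snd q - snd p))
                / (chord_len p q * chord_len p q)); [field; lra|].
  rewrite <- Hsq. field. lra.
Qed.

Lemma dir_x_sym p q : dir_x q p = - dir_x p q.
Proof. unfold dir_x; rewrite chord_len_sym; unfold Rdiv; ring. Qed.

Lemma dir_y_sym p q : dir_y q p = - dir_y p q.
Proof. unfold dir_y; rewrite chord_len_sym; unfold Rdiv; ring. Qed.

Lemma lift_chord p q : p <> q ->
  vsub (lift q) (lift p) = mkV (chord_len p q * dir_x p q) (chord_len p q * dir_y p q) 0.
Proof.
  intro Hpq. pose proof (chord_len_pos p q Hpq).
  unfold vsub, lift, dir_x, dir_y, vx, vy, vz, mkV; simpl.
  f_equal; [f_equal|]; field; lra.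
Qed.

Lemma lift_chord_unit p q : vunit (vsub (lift q) (lift p)) = mkV (dir_x p q) (dir_y p q) 0.
Proof.
  unfold vunit, vnorm, dot, vscale, vsub, lift, dir_x, dir_y, chord_len, vx, vy, vz, mkV; simpl.
  replace ((fst q - fst p) * (fst q - fst p) + (snd q - snd p) * (snd q - snd p) + (0 - 0) * (0 - 0))
    with ((fst q - fst p) * (fst q - fst p) + (snd q - snd p) * (snd q - snd p)) by ring.
  f_equal; [f_equal|]; unfold Rdiv; ring.
Qed.

Lemma dihedral_angle_exists (X : V3) : vz X <> 0 ->
  exists beta, 0 <= beta < PI / 2 /\ cos beta = Rabs (dot (vunit X) (mkV 0 0 1)).
Proof.
  intro Hz.
  assert (Hz2 : 0 < vz X * vz X) by (apply Rsqr_pos_lt; exact Hz).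
  assert (Hdot : dot X X = vx X * vx X + vy X * vy X + vz X * vz X) by reflexivity.
  assert (Hn : 0 < vnorm X) by (unfold vnorm; apply sqrt_lt_R0; rewrite Hdot; nra).
  assert (Hr : Rabs (dot (vunit X) (mkV 0 0 1)) = Rabs (vz X) / vnorm X).
  { unfold vunit, dot, vscale, mkV, vx, vy, vz; simpl.
    replace (/ vnorm X * fst (fst X) * 0 + / vnorm X * snd (fst X) * 0 + / vnorm X * snd X * 1)
      with (snd X * / vnorm X) by ring.
    rewrite Rabs_mult, (Rabs_right (/ vnorm X)); [reflexivity|].
    left; apply Rinv_0_lt_compat; lra. }
  assert (Hle : Rabs (vz X) <= vnorm X).
  { unfold vnorm. rewrite <- sqrt_Rsqr_abs. apply sqrt_le_1_alt.
    rewrite Hdot. unfold Rsqr. nra. }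
  assert (Hpos : 0 < Rabs (vz X)) by (apply Rabs_pos_lt; exact Hz).
  set (r := Rabs (vz X) / vnorm X).
  assert (Hr01 : 0 < r <= 1).
  { unfold r; split; [apply Rdiv_lt_0_compat; lra|].
    apply (Rmult_le_reg_r (vnorm X)); [lra|].
    unfold Rdiv; rewrite Rmult_assoc, Rinv_l; lra. }
  exists (acos r). rewrite Hr. fold r. rewrite cos_acos by lra.
  pose proof (acos_bound r).
  assert (Hcos : cos (PI / 2) < cos (acos r)) by (rewrite cos_acos, cos_PI2 by lra; lra).
  split; [split|]; [lra | | reflexivity].
  destruct (Rlt_le_dec (acos r) (PI / 2)) as [|Hge]; [assumption|].
  exfalso. pose proof PI_RGT_0.
  pose proof (cos_decr_1 (PI / 2) (acos r)). lra.
Qed.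
(* Admissible tangent vectors in the frame (chord direction, horizontal
   normal of the chord, vertical): unit vectors (A, B, H) with 0 <= A < 1,
   B > 0 and H >= 0. *)
Definition admissible (P : V3) : Prop :=
  0 <= vx P < 1 /\ 0 < vy P /\ 0 <= vz P /\ dot P P = 1.

Lemma sin_acos_facts A : 0 <= A < 1 ->
  0 < sin (acos A) /\ sin (acos A) * sin (acos A) = 1 - A * A.
Proof.
  intro HA. rewrite sin_acos by lra.
  assert (0 < 1 - A²) by (unfold Rsqr; nra).
  split; [apply sqrt_lt_R0; lra|]. rewrite sqrt_sqrt by lra. unfold Rsqr; ring.
Qed.

(* The arc over a chord of horizontal direction (e1, e2) whose tangent at the
   start is P = (A, B, H) in the chord frame: it meets the chord at angle
   acos A, and its plane contains the unit vector W = (0, B, H) / sin(acos A)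
   of the frame, rotated to the chord. *)
Definition arc_toward (P : V3) (e1 e2 : R) : arc :=
  mkArc (acos (vx P)) (vscale (/ sin (acos (vx P))) (rot_z e1 e2 (mkV 0 (vy P) (vz P)))).

(* The arc with an admissible tangent is a valid slanted arc: its plane
   rises out of the base plane (W has a positive vertical component when
   H > 0, and is horizontal-normal otherwise) and the arc stays above it. *)
Lemma arc_toward_valid (a b : R * R) (P : V3) (e1 e2 t : R) :
  admissible P -> e1 * e1 + e2 * e2 = 1 -> t <> 0 ->
  vsub (lift b) (lift a) = mkV (t * e1) (t * e2) 0 ->
  valid_slanted_arc (lift a) (lift b) (arc_toward P e1 e2).
Proof.
  destruct P as [[A B] H]. unfold admissible, vx, vy, vz; simpl.
  intros [HA [HB [HH Hunit]]] He Ht Hchord.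
  unfold dot, vx, vy, vz in Hunit; simpl in Hunit.
  destruct (sin_acos_facts A HA) as [Hsa Hsa2].
  set (sa := sin (acos A)) in *.
  unfold valid_slanted_arc, arc_toward, vx, vy, vz; simpl. fold sa.
  split; [|split; [|split; [|split]]].
  - pose proof (acos_bound A). split; [lra|].
    apply (cos_decr_0 (PI / 2) (acos A)); try lra. rewrite cos_acos, cos_PI2 by lra. lra.
  - unfold vnorm. rewrite <- sqrt_1. f_equal.
    assert (Hrot := rot_z_dot_self e1 e2 (mkV 0 B H) He).
    revert Hrot. unfold dot, vscale, rot_z, mkV, vx, vy, vz; simpl. intro Hrot.
    transitivity (/ sa * / sa * ((e1 * 0 - e2 * B) * (e1 * 0 - e2 * B)
      + (e2 * 0 + e1 * B) * (e2 * 0 + e1 * B) + H * H)); [ring|].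
    rewrite Hrot. replace (0 * 0 + B * B + H * H) with (1 - A * A) by lra.
    rewrite <- Hsa2. field. lra.
  - rewrite Hchord. unfold dot, vscale, rot_z, mkV, vx, vy, vz; simpl. ring.
  - apply dihedral_angle_exists. rewrite Hchord.
    unfold cross, vscale, rot_z, mkV, vx, vy, vz; simpl.
    replace (t * e1 * (/ sa * (e2 * 0 + e1 * B)) - t * e2 * (/ sa * (e1 * 0 - e2 * B)))
      with (t * B / sa * (e1 * e1 + e2 * e2)) by (field; lra).
    rewrite He, Rmult_1_r. unfold Rdiv.
    repeat apply Rmult_integral_contrapositive_currified; try lra.
    apply Rinv_neq_0_compat; lra.
  - intros Q [x [y [-> Hshape]]].
    assert (Hy : 0 <= y) by (destruct Hshape as [[_ [-> _]] | [_ [? _]]]; lra).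
    unfold vadd, vscale, vunit, rot_z, vsub, lift, mkV, vx, vy, vz; simpl.
    match goal with |- 0 <= ?z => replace z with (y * (H / sa)) by (unfold Rdiv; ring) end.
    apply Rmult_le_pos; [lra|]. unfold Rdiv; apply Rmult_le_pos; [lra|]; left; apply Rinv_0_lt_compat; lra.
Qed.

Lemma arc_toward_tangent (a b P : V3) (e1 e2 sg : R) :
  0 <= vx P < 1 -> vunit (vsub b a) = mkV (sg * e1) (sg * e2) 0 ->
  arc_tangent a b (arc_toward P e1 e2) = rot_z e1 e2 (flip_x sg P).
Proof.
  intros HA Hdir. destruct (sin_acos_facts (vx P) HA) as [Hsa _].
  unfold arc_tangent, arc_toward; simpl. rewrite Hdir, cos_acos by lra.
  unfold flip_x, rot_z, vadd, vscale, mkV, vx, vy, vz in *; simpl in *.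
  f_equal; [f_equal|]; field; lra.
Qed.

Definition grid_size (d : nat) : nat := 2 * (Nat.sqrt d + 1).
Definition palette_size (d : nat) : nat := grid_size d * grid_size d.
Definition grid_step (d : nat) : R := / (2 * INR (grid_size d)).

Definition palette (d k : nat) : V3 :=
  let A := grid_step d * INR ((k / grid_size d) mod grid_size d) in
  let H := grid_step d * INR (k mod grid_size d) in
  mkV A (sqrt (1 - A * A - H * H)) H.

Lemma grid_size_ge_2 d : (2 <= grid_size d)%nat.
Proof. unfold grid_size; lia. Qed.

Lemma palette_size_gt d : (2 * d < palette_size d)%nat.
Proof.
  pose proof (Nat.sqrt_spec d (Nat.le_0_l d)) as [_ Hlt].
  unfold palette_size, grid_size. nia.
Qed.

Lemma grid_coord_bound d j : (j < grid_size d)%nat -> 0 <= grid_step d * INR j < 1 / 2.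
Proof.
  intro Hj. pose proof (grid_size_ge_2 d) as Hm.
  apply le_INR in Hm. apply Nat.le_succ_l, le_INR in Hj. rewrite S_INR in Hj.
  pose proof (pos_INR j). simpl in Hm. unfold grid_step.
  split.
  - apply Rmult_le_pos; [left; apply Rinv_0_lt_compat|]; lra.
  - apply (Rmult_lt_reg_l (2 * INR (grid_size d))); [lra|].
    rewrite <- Rmult_assoc, Rinv_r by lra. lra.
Qed.

Lemma palette_admissible d k : admissible (palette d k).
Proof.
  pose proof (grid_size_ge_2 d) as Hm.
  pose proof (grid_coord_bound d ((k / grid_size d) mod grid_size d)
    ltac:(apply Nat.mod_upper_bound; lia)) as HA.
  pose proof (grid_coord_bound d (k mod grid_size d)
    ltac:(apply Nat.mod_upper_bound; lia)) as HH.
  unfold admissible, palette, dot, vx, vy, vz, mkV; simpl.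
  set (A := grid_step d * INR ((k / grid_size d) mod grid_size d)) in *.
  set (H := grid_step d * INR (k mod grid_size d)) in *.
  assert (0 < 1 - A * A - H * H) by nra.
  split; [lra | split; [apply sqrt_lt_R0; lra | split; [lra|]]].
  rewrite sqrt_sqrt by lra. ring.
Qed.

Lemma nat_dist_sq (a b : nat) : a <> b -> 1 <= (INR a - INR b) * (INR a - INR b).
Proof.
  intro Hab. destruct (Nat.lt_gt_cases a b) as [[Hlt | Hlt] _]; [exact Hab | |];
    apply (Nat.le_succ_l) in Hlt; apply le_INR in Hlt; rewrite S_INR in Hlt; nra.
Qed.

(* Distinct palette entries are at distance at least the grid step: their
   A- or H-coordinates differ by a nonzero multiple of it. *)
Lemma palette_separated d i j : (i < palette_size d)%nat -> (j < palette_size d)%nat -> i <> j ->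
  grid_step d * grid_step d <= sqd (palette d i) (palette d j).
Proof.
  intros Hi Hj Hij. pose proof (grid_size_ge_2 d) as Hm. unfold palette_size in *.
  unfold sqd, palette, vsub, dot, mkV, vx, vy, vz; simpl.
  set (m := grid_size d) in *. set (s := grid_step d).
  assert (Hdi : (i / m < m)%nat) by (apply Nat.Div0.div_lt_upper_bound; lia).
  assert (Hdj : (j / m < m)%nat) by (apply Nat.Div0.div_lt_upper_bound; lia).
  rewrite !(Nat.mod_small (_ / m)) by assumption.
  assert (Hcoord : (i / m <> j / m \/ i mod m <> j mod m)%nat).
  { destruct (Nat.eq_dec (i / m) (j / m)) as [Ediv | ?]; [right | left; assumption].
    intro Emod. apply Hij.
    rewrite (Nat.div_mod_eq i m), (Nat.div_mod_eq j m), Ediv, Emod. reflexivity. }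
  match goal with |- _ <= ?X * ?X + ?Y * ?Y + ?Z * ?Z =>
    pose proof (Rle_0_sqr X); pose proof (Rle_0_sqr Y); pose proof (Rle_0_sqr Z) end.
  pose proof (Rle_0_sqr s). unfold Rsqr in *.
  destruct Hcoord as [Hne | Hne]; apply nat_dist_sq in Hne.
  - replace ((s * INR (i / m) - s * INR (j / m)) * (s * INR (i / m) - s * INR (j / m)))
      with (s * s * ((INR (i / m) - INR (j / m)) * (INR (i / m) - INR (j / m)))) in * by ring.
    nra.
  - replace ((s * INR (i mod m) - s * INR (j mod m)) * (s * INR (i mod m) - s * INR (j mod m)))
      with (s * s * ((INR (i mod m) - INR (j mod m)) * (INR (i mod m) - INR (j mod m)))) in * by ring.
    nra.
Qed.

Lemma half_step_bounds d : (1 <= d)%nat ->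
  0 <= 1 / 16 / sqrt (INR d) <= grid_step d / 2 /\ grid_step d / 2 <= 1.
Proof.
  intro Hd. unfold grid_step, grid_size. rewrite mult_INR, plus_INR.
  replace (INR 2) with 2 by (simpl; ring). replace (INR 1) with 1 by reflexivity.
  pose proof (Nat.sqrt_spec d (Nat.le_0_l d)) as [Hsq _].
  set (q := Nat.sqrt d) in *. pose proof (pos_INR q).
  assert (Hq : INR q <= sqrt (INR d)).
  { rewrite <- (sqrt_square (INR q)) by lra. apply sqrt_le_1_alt.
    rewrite <- mult_INR. apply le_INR; assumption. }
  assert (H1d : 1 <= sqrt (INR d)).
  { rewrite <- sqrt_1. apply sqrt_le_1_alt. apply (le_INR 1); assumption. }
  split; [split|].
  - unfold Rdiv; apply Rmult_le_pos; [lra|]. left; apply Rinv_0_lt_compat; lra.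
  - replace (1 / 16 / sqrt (INR d)) with (/ (16 * sqrt (INR d))) by (field; lra).
    replace (/ (2 * (2 * (INR q + 1))) / 2) with (/ (8 * (INR q + 1))) by (field; lra).
    apply Rinv_le_contravar; lra.
  - assert (0 < / (2 * (2 * (INR q + 1))) <= / 4).
    { split; [apply Rinv_0_lt_compat; lra | apply Rinv_le_contravar; lra]. }
    lra.
Qed.

(* The edge {a,b}
   is drawn using the chord direction from its smaller to its larger
   endpoint, so that the two orientations give the same arc; from endpoint a
   the chord direction is then multiplied by the sign edge_sign a b. *)
Section EdgeArcs.
Variable pos : nat -> R * R.

Definition edge_dir_x (a b : nat) : R := dir_x (pos (Nat.min a b)) (pos (Nat.max a b)).
Definition edge_dir_y (a b : nat) : R := dir_y (pos (Nat.min a b)) (pos (Nat.max a b)).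
Definition edge_sign (a b : nat) : R := if Nat.ltb a b then 1 else -1.

Definition edge_arc (d a b k : nat) : arc :=
  arc_toward (palette d k) (edge_dir_x a b) (edge_dir_y a b).

Definition edge_tangent (d a b k : nat) : V3 :=
  rot_z (edge_dir_x a b) (edge_dir_y a b) (flip_x (edge_sign a b) (palette d k)).

Lemma edge_arc_sym d a b k : edge_arc d a b k = edge_arc d b a k.
Proof. unfold edge_arc, edge_dir_x, edge_dir_y. rewrite Nat.min_comm, Nat.max_comm. reflexivity. Qed.

Lemma edge_sign_sq a b : edge_sign a b * edge_sign a b = 1.
Proof. unfold edge_sign; destruct (Nat.ltb a b); ring. Qed.

Lemma edge_dir_oriented a b : a <> b ->
  dir_x (pos a) (pos b) = edge_sign a b * edge_dir_x a b /\
  dir_y (pos a) (pos b) = edge_sign a b * edge_dir_y a b.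
Proof.
  intro Hab. unfold edge_sign, edge_dir_x, edge_dir_y.
  destruct (Nat.ltb_spec a b) as [Hlt | Hge].
  - rewrite Nat.min_l, Nat.max_r by lia. split; ring.
  - rewrite Nat.min_r, Nat.max_l, dir_x_sym, dir_y_sym by lia. split; ring.
Qed.

Lemma edge_dir_unit a b : pos a <> pos b ->
  edge_dir_x a b * edge_dir_x a b + edge_dir_y a b * edge_dir_y a b = 1.
Proof.
  intro Hp. unfold edge_dir_x, edge_dir_y. apply dir_unit.
  destruct (Nat.le_ge_cases a b);
    [rewrite Nat.min_l, Nat.max_r | rewrite Nat.min_r, Nat.max_l]; auto.
Qed.

Lemma edge_arc_valid d a b k : a <> b -> pos a <> pos b ->
  valid_slanted_arc (lift (pos a)) (lift (pos b)) (edge_arc d a b k).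
Proof.
  intros Hab Hp. destruct (edge_dir_oriented a b Hab) as [Ex Ey].
  pose proof (chord_len_pos _ _ Hp).
  apply (arc_toward_valid _ _ _ _ _ (chord_len (pos a) (pos b) * edge_sign a b)).
  - apply palette_admissible.
  - apply edge_dir_unit; assumption.
  - unfold edge_sign; destruct (Nat.ltb a b); nra.
  - rewrite lift_chord, Ex, Ey by assumption. unfold mkV; apply f_equal2; [apply f_equal2|]; ring.
Qed.

Lemma edge_arc_tangent d a b k : a <> b ->
  arc_tangent (lift (pos a)) (lift (pos b)) (edge_arc d a b k) = edge_tangent d a b k.
Proof.
  intro Hab. destruct (edge_dir_oriented a b Hab) as [Ex Ey].
  apply arc_toward_tangent.
  - destruct (palette_admissible d k) as [HA _]; exact HA.
  - rewrite lift_chord_unit, Ex, Ey. reflexivity.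
Qed.

Lemma edge_tangent_unit d a b k : pos a <> pos b ->
  dot (edge_tangent d a b k) (edge_tangent d a b k) = 1.
Proof.
  intro Hp. destruct (palette_admissible d k) as [_ [_ [_ Hunit]]].
  unfold edge_tangent.
  rewrite rot_z_dot_self, flip_x_dot_self; auto using edge_sign_sq, edge_dir_unit.
Qed.

Lemma edge_tangent_separated d a b i j : pos a <> pos b ->
  (i < palette_size d)%nat -> (j < palette_size d)%nat -> i <> j ->
  grid_step d * grid_step d <= sqd (edge_tangent d a b i) (edge_tangent d a b j).
Proof.
  intros Hp Hi Hj Hij. unfold edge_tangent.
  rewrite rot_z_sqd, flip_x_sqd; auto using edge_sign_sq, edge_dir_unit, palette_separated.
Qed.

End EdgeArcs.

(* A colouring F assigns to each edge
   {lo, hi} (lo < hi) the palette index F lo hi; it is separated on a list of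
   edges E when, at every vertex, the tangents of any two distinct edges of E
   are at squared distance at least rho^2, rho = grid_step d / 2. *)
Section GreedyColouring.
Variables (n : nat) (adj : nat -> nat -> bool) (pos : nat -> R * R) (d : nat).
Hypothesis Hsimple : simple_graph n adj.
Hypothesis Hdeg : max_degree n adj d.
Hypothesis Hpos : distinct_positions n pos.

Definition rho : R := grid_step d / 2.

Definition colour (F : nat -> nat -> nat) (a b : nat) : nat := F (Nat.min a b) (Nat.max a b).

Definition tangent (F : nat -> nat -> nat) (v w : nat) : V3 := edge_tangent pos d v w (colour F v w).

Definition separated_on (F : nat -> nat -> nat) (E : list (nat * nat)) : Prop :=
  forall v w1 w2, adj v w1 = true -> adj v w2 = true -> w1 <> w2 ->
    In (Nat.min v w1, Nat.max v w1) E -> In (Nat.min v w2, Nat.max v w2) E ->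
    rho * rho <= sqd (tangent F v w1) (tangent F v w2).

Lemma adj_facts a b : adj a b = true -> a <> b /\ (a < n)%nat /\ (b < n)%nat /\ pos a <> pos b.
Proof.
  intro Hab. destruct Hsimple as [_ [Hirr Hrange]]. destruct (Hrange a b Hab) as [Ha Hb].
  assert (a <> b) by (intro E; subst; rewrite Hirr in Hab; discriminate).
  repeat split; auto.
Qed.

Definition other_neighbours (v w : nat) : list nat :=
  filter (fun x => andb (adj v x) (negb (Nat.eqb x w))) (seq 0 n).

Lemma other_neighbours_length v w : adj v w = true -> (length (other_neighbours v w) < d)%nat.
Proof.
  intro Hvw. destruct (adj_facts v w Hvw) as [_ [Hv [Hw _]]].
  apply (Nat.lt_le_trans _ (degree n adj v)); [|apply Hdeg; assumption].
  apply (length_filter_lt _ _ w).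
  - intros x Hx. apply andb_prop in Hx; tauto.
  - apply in_seq; lia.
  - assumption.
  - rewrite Hvw, Nat.eqb_refl; reflexivity.
Qed.

(* Palette index k for the edge {v,w} is in conflict at v with the already
   coloured edge {v,x}. *)
Definition conflict (F : nat -> nat -> nat) (c : nat * nat * nat) (k : nat) : Prop :=
  let '(v, w, x) := c in sqd (edge_tangent pos d v w k) (tangent F v x) < rho * rho.

(* An existing tangent conflicts with at most one palette index: two
   conflicting indices would give tangents closer than the palette step. *)
Lemma conflict_unique F v w x i j : pos v <> pos w ->
  (i < palette_size d)%nat -> (j < palette_size d)%nat ->
  conflict F (v, w, x) i -> conflict F (v, w, x) j -> i = j.
Proof.
  intros Hp Hi Hj Ci Cj. simpl in Ci, Cj.
  destruct (Nat.eq_dec i j) as [|Hij]; [assumption|exfalso].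
  pose proof (edge_tangent_separated pos d v w i j Hp Hi Hj Hij) as Hsep.
  pose proof (sqd_le_double (edge_tangent pos d v w i) (tangent F v x) (edge_tangent pos d v w j)).
  rewrite (sqd_sym (tangent F v x)) in *. unfold rho in *. lra.
Qed.

(* For a new edge {lo,hi} some palette index conflicts with no edge at lo
   or hi: there are at most 2(d - 1) such edges but more palette indices. *)
Lemma free_colour_exists F lo hi : adj lo hi = true ->
  exists k, forall v w x, Nat.min v w = lo -> Nat.max v w = hi -> adj v x = true -> x <> w ->
      rho * rho <= sqd (edge_tangent pos d v w k) (tangent F v x).
Proof.
  intro Hadj.
  destruct (adj_facts lo hi Hadj) as [Hne [Hlo [Hhi Hp]]].
  assert (Hadj' : adj hi lo = true) by (destruct Hsimple as [Hsym _]; rewrite Hsym; assumption).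
  set (cs := map (fun x => (lo, hi, x)) (other_neighbours lo hi)
          ++ map (fun x => (hi, lo, x)) (other_neighbours hi lo)).
  destruct (free_index_exists (conflict F) cs (seq 0 (palette_size d))) as [k [Hk Hfree]].
  - apply seq_NoDup.
  - unfold cs. rewrite length_app, !length_map, length_seq.
    pose proof (other_neighbours_length lo hi Hadj).
    pose proof (other_neighbours_length hi lo Hadj').
    pose proof (palette_size_gt d). lia.
  - intros c Hc i j Hi Hj. apply in_seq in Hi, Hj.
    unfold cs in Hc. apply in_app_or in Hc.
    destruct Hc as [Hc | Hc]; apply in_map_iff in Hc; destruct Hc as [x [<- _]];
      apply conflict_unique; auto; lia.
  - exists k. intros v w x Hmin Hmax Hvx Hxw.
    destruct (adj_facts v x Hvx) as [_ [_ [Hx _]]].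
    assert (Hx_in : forall a b, adj a x = true -> x <> b -> In x (other_neighbours a b)).
    { intros a b Hax Hxb. apply filter_In. split; [apply in_seq; lia|].
      rewrite Hax. apply Bool.negb_true_iff, Nat.eqb_neq. assumption. }
    assert (Hc : In (v, w, x) cs).
    { unfold cs. apply in_or_app.
      destruct (Nat.le_ge_cases v w) as [Hvw | Hvw].
      - rewrite Nat.min_l in Hmin by lia. rewrite Nat.max_r in Hmax by lia. subst.
        left. apply in_map. auto.
      - rewrite Nat.min_r in Hmin by lia. rewrite Nat.max_l in Hmax by lia. subst.
        right. apply in_map. auto. }
    specialize (Hfree _ Hc). simpl in Hfree. lra.
Qed.

Lemma extend_colouring F lo hi E : adj lo hi = true -> separated_on F E ->
  exists F', separated_on F' ((lo, hi) :: E).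
Proof.
  intros Hadj Hsep.
  destruct (free_colour_exists F lo hi Hadj) as [k Hfree].
  set (is_new := fun a b => andb (Nat.eqb a lo) (Nat.eqb b hi)).
  exists (fun a b => if is_new a b then k else F a b).
  assert (Htan : forall v w, tangent (fun a b => if is_new a b then k else F a b) v w =
    if is_new (Nat.min v w) (Nat.max v w) then edge_tangent pos d v w k else tangent F v w).
  { intros v w. unfold tangent, colour. destruct (is_new _ _); reflexivity. }
  assert (Hnew : forall v w, is_new (Nat.min v w) (Nat.max v w) = true ->
            Nat.min v w = lo /\ Nat.max v w = hi).
  { intros v w H. apply andb_prop in H as [H1 H2]. apply Nat.eqb_eq in H1, H2. auto. }
  assert (Hold : forall v w, is_new (Nat.min v w) (Nat.max v w) = false ->
            In (Nat.min v w, Nat.max v w) ((lo, hi) :: E) -> In (Nat.min v w, Nat.max v w) E).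
  { intros v w H [Heq | Hin]; [|assumption].
    injection Heq as H1 H2. unfold is_new in H. rewrite H1, H2, !Nat.eqb_refl in H. discriminate. }
  intros v w1 w2 H1 H2 Hw I1 I2. rewrite !Htan.
  destruct (is_new (Nat.min v w1) (Nat.max v w1)) eqn:N1,
           (is_new (Nat.min v w2) (Nat.max v w2)) eqn:N2.
  - exfalso. destruct (Hnew v w1 N1), (Hnew v w2 N2). lia.
  - destruct (Hnew v w1 N1). apply Hfree; auto.
  - destruct (Hnew v w2 N2). rewrite sqd_sym. apply Hfree; auto.
  - apply Hsep; auto.
Qed.

Lemma colouring_exists E : (forall a b, In (a, b) E -> adj a b = true) ->
  exists F, separated_on F E.
Proof.
  induction E as [|[lo hi] E IH]; intros HE.
  - exists (fun _ _ => 0%nat). intros v w1 w2 _ _ _ [].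
  - destruct IH as [F HF]; [intros a b Hin; apply HE; right; assumption|].
    apply (extend_colouring F); [apply HE; left; reflexivity | assumption].
Qed.

End GreedyColouring.

Definition edge_list (n : nat) (adj : nat -> nat -> bool) : list (nat * nat) :=
  filter (fun p => adj (fst p) (snd p)) (list_prod (seq 0 n) (seq 0 n)).

Lemma edge_list_adj n adj a b : In (a, b) (edge_list n adj) -> adj a b = true.
Proof. intro Hin. apply filter_In in Hin. exact (proj2 Hin). Qed.

Lemma edge_list_complete n adj a b : simple_graph n adj -> adj a b = true ->
  In (Nat.min a b, Nat.max a b) (edge_list n adj).
Proof.
  intros [Hsym [_ Hrange]] Hab. destruct (Hrange a b Hab) as [Ha Hb].
  apply filter_In. split.
  - apply in_prod; apply in_seq; lia.
  - destruct (Nat.le_ge_cases a b);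
      [rewrite Nat.min_l, Nat.max_r | rewrite Nat.min_r, Nat.max_l, Hsym]; auto.
Qed.

Theorem theorem3 :
  exists c : R, 0 < c /\
    forall (n : nat) (adj : nat -> nat -> bool) (pos : nat -> R * R) (d : nat),
      simple_graph n adj ->
      max_degree n adj d ->
      (1 <= d)%nat ->
      distinct_positions n pos ->
      exists Arc : nat -> nat -> arc,
        slanted_arc_drawing n adj pos Arc /\
        angular_resolution_ge n adj pos Arc (c / sqrt (INR d)).
Proof.
  exists (1 / 16). split; [lra|].
  intros n adj pos d Hsimple Hdeg Hd Hpos.
  destruct (colouring_exists n adj pos d Hsimple Hdeg Hpos (edge_list n adj)) as [F HF].
  { apply edge_list_adj. }
  exists (fun a b => edge_arc pos d a b (colour F a b)).
  split.
  - intros a b Hab. destruct (adj_facts n adj pos Hsimple Hpos a b Hab) as [Hne [_ [_ Hp]]].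
    split; [|apply edge_arc_valid; assumption].
    unfold colour. rewrite edge_arc_sym, Nat.min_comm, Nat.max_comm. reflexivity.
  - intros v w1 w2 H1 H2 Hw.
    destruct (adj_facts n adj pos Hsimple Hpos v w1 H1) as [Hne1 [_ [_ Hp1]]].
    destruct (adj_facts n adj pos Hsimple Hpos v w2 H2) as [Hne2 [_ [_ Hp2]]].
    rewrite !edge_arc_tangent by assumption.
    destruct (half_step_bounds d Hd) as [Hlow Hle1].
    apply (Rle_trans _ (rho d)); [apply Hlow|].
    apply angle_ge_of_sqd; try apply edge_tangent_unit; auto.
    + unfold rho. lra.
    + apply HF; auto using edge_list_complete.
Qed.
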